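(* For every integer $r\ge2$ there is a constant $C(r)$ such that every $d$-regular graph $G$ on $n$ vertices with girth at least $2\log\log d+3$ satisfies $m(G,r)\le C(r)\,n\,d^{-\frac{r}{r-1}}$.
   Context: Bootstrap percolation with threshold $r\ge 2$ on a graph $G=(V,E)$: given a set $A_0\subseteq V$ of seeds, define for $i\ge1$ $A_i=A_{i-1}\cup\{v:|N(v)\cap A_{i-1}|\ge r\}$, where $N(v)$ is the set of neighbors of $v$, and $\langle A_0\rangle=\bigcup_i A_i$. The set $A_0$ is contagious if $\langle A_0\rangle=V$; $m(G,r)$ denotes the minimum cardinality of a contagious set. The girth is the length of a shortest cycle. Logarithms are base 2. *)

From mathcomp Require Import all_boot.
From Stdlib Require Import Reals.
Set Implicit Arguments. Unset Strict Implicit. Unset Printing Implicit Defensive.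

Definition simple_graph (T : finType) (e : rel T) : Prop :=
  symmetric e /\ irreflexive e.

Definition nbhd (T : finType) (e : rel T) (v : T) : {set T} := [set u | e v u].

Definition regular (T : finType) (e : rel T) (d : nat) : Prop :=
  forall v : T, #|nbhd e v| = d.

Definition is_cycle (T : finType) (e : rel T) (s : seq T) : bool :=
  [&& uniq s, 3 <= size s & cycle e s].

(* "girth >= g": every cycle has length >= g (vacuous for acyclic graphs,
   whose girth is +infinity). *)
Definition girth_at_least (T : finType) (e : rel T) (g : R) : Prop :=
  forall s : seq T, is_cycle e s -> (g <= INR (size s))%R.

Definition bp_step (T : finType) (e : rel T) (r : nat) (A : {set T}) : {set T} :=
  A :|: [set v | r <= #|nbhd e v :&: A|].

Definition bp_iter (T : finType) (e : rel T) (r : nat) (A0 : {set T}) (i : nat)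
  : {set T} := iter i (bp_step e r) A0.

Definition contagious (T : finType) (e : rel T) (r : nat) (A0 : {set T}) : Prop :=
  forall v : T, exists i : nat, v \in bp_iter e r A0 i.

Definition is_min_contagious_size (T : finType) (e : rel T) (r : nat) (m : nat)
  : Prop :=
  (exists A0 : {set T}, contagious e r A0 /\ #|A0| = m) /\
  (forall A0 : {set T}, contagious e r A0 -> m <= #|A0|).

Definition log2 (x : R) : R := (ln x / ln 2)%R.

From mathcomp Require Import all_boot.
From Stdlib Require Import Reals.
From Stdlib Require Import Lra.
From mathcomp Require Import zify.
Set Implicit Arguments. Unset Strict Implicit. Unset Printing Implicit Defensive.

(* Proof by random seeding.  Seed each vertex independently with probability
   p = K d^(-s), s = r/(r-1), and call a vertex x a failure if it does not get
   infected by r-neighbour bootstrap percolation run only on the depth-R0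
   non-backtracking tree below x.  Seeds plus failures always form a contagious
   set.  Where the girth exceeds 2 R0, the subtrees below distinct children of a
   vertex are disjoint, so the infection events of the children are independent
   and Q_k, the probability that the root of a depth-k subtree is infected,
   satisfies Q_{k+1} >= P[Bin(d-1, Q_k) >= r].  Estimating this binomial tail,
   Q_k grows doubly exponentially from p up to 1/(2d), then reaches a constant,
   and then 1 - Q <= M/d^2 <= M d^(-s).  Since 2^(2^R0) < d <= 2^(2^(R0+1)) leaves
   enough depth, the expected size n (p + 1 - Q_R0) is O(n d^(-s)), and some
   outcome is no larger.  Small degrees follow from the trivial bound m <= n. *)


(* A colouring is a map
   f : T -> bool (f x = "x is a seed"); [bexp p l F] is the expectation of F when
   the coordinates listed in l are independent p-coins and all others are false.
   Being defined by recursion on l, it needs no measure theory. *)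
Section BernoulliProduct.
Variable T : finType.
Variable p : R.
Hypothesis p_ge0 : (0 <= p)%R.
Hypothesis p_le1 : (p <= 1)%R.

Definition recolour (f : T -> bool) (x : T) (b : bool) : T -> bool :=
  fun y => if y == x then b else f y.

Fixpoint bexp (l : seq T) (F : (T -> bool) -> R) : R :=
  match l with
  | [::] => F (fun _ => false)
  | x :: l' => (p * bexp l' (fun f => F (recolour f x true)) +
                (1 - p) * bexp l' (fun f => F (recolour f x false)))%R
  end.

Lemma bexp_ext l F G : (forall f, F f = G f) -> bexp l F = bexp l G.
Proof.
elim: l F G => [|x l IH] F G FG /=; first by rewrite FG.
by congr (_ * _ + _ * _)%R; apply: IH => f; rewrite FG.
Qed.

Lemma bexp_le l F G : (forall f, F f <= G f)%R -> (bexp l F <= bexp l G)%R.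
Proof.
elim: l F G => [|x l IH] F G FG //=.
have := IH (fun f => F (recolour f x true)) (fun f => G (recolour f x true)) (fun f => FG _).
have := IH (fun f => F (recolour f x false)) (fun f => G (recolour f x false)) (fun f => FG _).
nra.
Qed.

Lemma bexp_const l c : bexp l (fun _ => c) = c.
Proof. by elim: l => [|x l IH] //=; rewrite IH; ring. Qed.

Lemma bexp_add l F G : bexp l (fun f => F f + G f)%R = (bexp l F + bexp l G)%R.
Proof.
elim: l F G => [|x l IH] F G //=.
rewrite (IH (fun f => F (recolour f x true))) (IH (fun f => F (recolour f x false))).
ring.
Qed.

Lemma bexp_scale l c F : bexp l (fun f => c * F f)%R = (c * bexp l F)%R.
Proof.
elim: l F => [|x l IH] F //=.
rewrite (IH (fun f => F (recolour f x true))) (IH (fun f => F (recolour f x false))).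
ring.
Qed.

Lemma bexp_witness l F : exists f, (F f <= bexp l F)%R.
Proof.
elim: l F => [|x l IH] F /=; first by exists (fun _ => false); lra.
have [f1 Hf1] := IH (fun f => F (recolour f x true)).
have [f2 Hf2] := IH (fun f => F (recolour f x false)).
case: (Rle_dec (bexp l (fun f => F (recolour f x true)))
               (bexp l (fun f => F (recolour f x false)))) => cmp.
- by exists (recolour f1 x true); nra.
- by exists (recolour f2 x false); nra.
Qed.

Definition indR (b : bool) : R := if b then 1%R else 0%R.

Lemma indR_inj a c : indR a = indR c -> a = c.
Proof. by case: a; case: c => //=; lra. Qed.

Lemma bexp_coin l x : bexp l (fun f => indR (f x)) = if x \in l then p else 0%R.
Proof.
elim: l => [|y l IH] //=.
rewrite in_cons; case: (eqVneq x y) => [->|ne] /=.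
- by rewrite /recolour eqxx !bexp_const /indR; lra.
- by rewrite /recolour (negbTE ne) IH; case: (x \in l); lra.
Qed.

Definition depends_on (F : (T -> bool) -> R) (A : pred T) :=
  forall f g, (forall y, A y -> f y = g y) -> F f = F g.

Lemma depends_on_recolour F A x b :
  depends_on F A -> depends_on (fun f => F (recolour f x b)) A.
Proof.
move=> FA f g fg; apply: FA => y Ay; rewrite /recolour.
by case: (y == x) => //; apply: fg.
Qed.

Lemma recolour_outside F A x b f :
  depends_on F A -> A x = false -> F (recolour f x b) = F f.
Proof.
move=> FA Ax; apply: FA => y Ay; rewrite /recolour.
by case: eqP => // yx; rewrite yx Ax in Ay.
Qed.

Lemma bexp_indep l F G A B :
  depends_on F A -> depends_on G B -> (forall y, A y -> B y -> False) ->
  bexp l (fun f => F f * G f)%R = (bexp l F * bexp l G)%R.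
Proof.
elim: l F G A B => [|x l IH] F G A B FA GB AB //.
(* It suffices to treat the case where G ignores the coordinate x. *)
suff key : forall F G A B, depends_on F A -> depends_on G B ->
    (forall y, A y -> B y -> False) -> B x = false ->
    bexp (x :: l) (fun f => F f * G f)%R = (bexp (x :: l) F * bexp (x :: l) G)%R.
  case Ax: (A x).
    by apply: (key _ _ A B) => //; apply/negP => Bx; apply: AB Ax Bx.
  rewrite (@bexp_ext _ _ (fun f => G f * F f)%R); last by move=> f; ring.
  rewrite (key G F B A) //; first exact: Rmult_comm.
  by move=> y By Ay; apply: AB Ay By.
clear F G A B FA GB AB; move=> F G A B FA GB AB Bx /=.
have Gx b f : G (recolour f x b) = G f by apply: recolour_outside GB Bx.
have E b : bexp l (fun f => F (recolour f x b) * G (recolour f x b))%R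
          = (bexp l (fun f => F (recolour f x b)) * bexp l G)%R.
  rewrite (@bexp_ext l _ (fun f => F (recolour f x b) * G f)%R); last by move=> f; rewrite Gx.
  exact: IH (depends_on_recolour x b FA) GB AB.
have E' b : bexp l (fun f => G (recolour f x b)) = bexp l G by apply: bexp_ext.
by rewrite !E !E'; ring.
Qed.

Lemma bexp_constant l F c : (forall f, F f = c) -> bexp l F = c.
Proof. by move=> Fc; rewrite (bexp_ext l Fc) bexp_const. Qed.

Lemma bexp_ind_range l E : (0 <= bexp l (fun f => indR (E f)) <= 1)%R.
Proof.
split.
- rewrite -(bexp_const l 0); apply: bexp_le => f; case: (E f) => /=; lra.
- rewrite -(bexp_const l 1); apply: bexp_le => f; case: (E f) => /=; lra.
Qed.

Lemma bexp_compl l E :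
  bexp l (fun f => 1 - indR (E f))%R = (1 - bexp l (fun f => indR (E f)))%R.
Proof.
rewrite (@bexp_ext l _ (fun f => 1 + (-1) * indR (E f))%R); last by move=> f; ring.
by rewrite bexp_add bexp_const bexp_scale; ring.
Qed.

Lemma bexp_count_le l (P : (T -> bool) -> pred T) (s : seq T) a :
  (forall x, x \in s -> bexp l (fun f => indR (P f x)) <= a)%R ->
  (bexp l (fun f => INR (count (P f) s)) <= INR (size s) * a)%R.
Proof.
elim: s => [|x s IH] Pa; first by rewrite /= bexp_const; lra.
rewrite (@bexp_ext l _ (fun f => indR (P f x) + INR (count (P f) s))%R); last first.
  by move=> f; rewrite /= plus_INR; case: (P f x).
rewrite bexp_add [size _]/= S_INR.
have := Pa x (mem_head x s).
have := IH (fun y ys => Pa y (mem_behead (s := x :: s) ys)).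
lra.
Qed.

End BernoulliProduct.

(* A walk that never immediately returns to the vertex
   it just left, and that visits some vertex twice, contains a cycle at most as
   long as itself.  Consequently, in a graph of large girth the balls explored by
   non-backtracking walks from distinct neighbours of a vertex are disjoint. *)
Section NonBacktracking.
Variable T : finType.
Variable e : rel T.
Hypothesis e_sym : symmetric e.
Hypothesis e_irr : irreflexive e.

Fixpoint nonbacktracking (s : seq T) : bool :=
  match s with
  | a :: ((b :: c :: _) as t) => (a != c) && nonbacktracking t
  | _ => true
  end.

Lemma nonbacktracking_behead h t :
  nonbacktracking (h :: t) -> nonbacktracking t.
Proof. by case: t => [|a [|b t]] //= /andP[]. Qed.

Lemma nonbacktracking_catl s t : nonbacktracking (s ++ t) -> nonbacktracking s.
Proof.
elim: s => [|h s IH] //=.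
by case: s IH => [|a [|b s]] //= IH /andP[-> /IH].
Qed.

(* The condition is local, so it can be checked on two overlapping pieces. *)
Lemma nonbacktracking_split u b c t :
  nonbacktracking (u ++ [:: b, c & t]) =
  nonbacktracking (u ++ [:: b; c]) && nonbacktracking [:: b, c & t].
Proof.
elim: u => [|h u IH] //=.
case: u IH => [|h2 [|h3 u]] /= IH.
- by rewrite andbT.
- by rewrite IH andbT andbA.
- by rewrite IH andbA.
Qed.

(* A non-backtracking walk x :: s with a repeated vertex contains a cycle of
   length at most size s: cut the walk at the first return to x, or drop x. *)
Lemma nonbacktracking_cycle n x s :
  size s <= n -> path e x s -> nonbacktracking (x :: s) -> ~~ uniq (x :: s) ->
  exists c, is_cycle e c && (size c <= size s).
Proof.
elim: n x s => [|n IH] x s Hs Hp Hnb Hu.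
  by move: Hs; rewrite leqn0 => /nilP Hs; rewrite Hs in Hu.
case Hx: (x \in s); last first.
  move: Hu; rewrite /= Hx /=.
  case: s Hs Hp Hnb Hx => [|y s] // Hs /andP[_ Hp] Hnb _ Hu.
  have [c /andP[Hc Hcs]] := IH y s Hs Hp (nonbacktracking_behead Hnb) Hu.
  by exists c; rewrite Hc (leq_trans Hcs).
pose s1 := take (index x s) s.
have Hi : index x s < size s by rewrite index_mem.
have Hsplit : s = s1 ++ x :: drop (index x s).+1 s.
  by rewrite -{1}(cat_take_drop (index x s) s) (drop_nth x) // nth_index.
have x_s1 : x \notin s1 by rewrite /s1 in_take // ltnn.
have Hs1 : size s1 < size s by rewrite /s1 size_take Hi.
move: Hp; rewrite {1}Hsplit cat_path /= => /and3P[Hp1 He _].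
have Hnb1 : nonbacktracking (x :: s1).
  by move: Hnb; rewrite Hsplit -cat_cons => /nonbacktracking_catl.
case Hu1: (uniq (x :: s1)).
  exists (x :: s1); rewrite /is_cycle Hu1 /= rcons_path Hp1 He Hs1 !andbT.
  clearbody s1; case: s1 {x_s1 Hs1 Hu1 Hnb1} Hsplit Hp1 He => [|a [|b s1]] // Hsplit _ He.
  - by rewrite /= e_irr in He.
  - by move: Hnb; rewrite Hsplit /= eqxx.
have [c /andP[Hc Hcs]] :=
  IH x s1 (leq_trans Hs1 Hs) Hp1 Hnb1 (negbT Hu1).
by exists c; rewrite Hc (leq_trans Hcs (ltnW Hs1)).
Qed.

(* [nb_reach k par x z]: z is the endpoint of a non-backtracking walk of length
   at most k starting at x whose first step does not go back to par, i.e. z lies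
   in the depth-k subtree rooted at x when the tree is entered from par. *)
Fixpoint nb_reach (k : nat) (par x z : T) : bool :=
  if k is k'.+1 then (z == x) || [exists y, e x y && (y != par) && nb_reach k' x y z]
  else z == x.

Lemma nb_reach_walk k par x z : nb_reach k par x z ->
  exists w, [&& path e x w, last x w == z, size w <= k &
                nonbacktracking [:: par, x & w]].
Proof.
elim: k par x => [|k IH] par x /=.
  by move/eqP->; exists [::]; rewrite /= eqxx.
case/orP => [/eqP->|/existsP[y /andP[/andP[xy ypar] Hy]]].
  by exists [::]; rewrite /= eqxx.
have [w /and4P[Hp Hl Hs Hnb]] := IH _ _ Hy.
by exists (y :: w); rewrite /= in Hnb; rewrite /= xy Hp Hl ltnS Hs eq_sym ypar Hnb.
Qed.

Lemma nb_reach_walk_back k par x z : nb_reach k par x z ->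
  exists s, [&& path e z s, last z s == x, size s <= k &
                nonbacktracking (rcons (z :: s) par)].
Proof.
elim: k par x => [|k IH] par x /=.
  by move/eqP->; exists [::]; rewrite /= eqxx.
case/orP => [/eqP->|/existsP[y /andP[/andP[xy ypar] Hy]]].
  by exists [::]; rewrite /= eqxx.
have [s /and4P[Hp /eqP Hl Hs Hnb]] := IH _ _ Hy.
have Hnb' : nonbacktracking (rcons (rcons (z :: s) x) par).
  have -> : rcons (rcons (z :: s) x) par = belast z s ++ [:: y, x & [:: par]].
    by rewrite -Hl -cats1 -cats1 (lastI z s) -cats1 -!catA.
  rewrite nonbacktracking_split /= andbT ypar andbT.
  by move: Hnb; rewrite -cats1 (lastI z s) Hl -cats1 -catA.
exists (rcons s x); apply/and4P; split => //.
- by rewrite rcons_path Hp Hl e_sym xy.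
- by rewrite last_rcons.
- by rewrite size_rcons ltnS.
Qed.

(* Two distinct neighbours y1, y2 of x whose depth-k subtrees share a vertex z
   yield a cycle of length at most 2k + 2 (through z, y1, x, y2). *)
Lemma nb_reach_overlap_cycle k x y1 y2 z : e x y1 -> e x y2 -> y1 != y2 ->
  nb_reach k x y1 z -> nb_reach k x y2 z ->
  exists c, is_cycle e c && (size c <= (k + k).+2).
Proof.
move=> xy1 xy2 y12 z1 z2.
have [s1 /and4P[P1 /eqP L1 S1 N1]] := nb_reach_walk_back z1.
have [w2 /and4P[P2 /eqP L2 S2 N2]] := nb_reach_walk z2.
pose s := rcons s1 x ++ y2 :: w2.
have Hp : path e z s.
  by rewrite cat_path rcons_path P1 L1 e_sym xy1 last_rcons /= xy2 P2.
have Hnb : nonbacktracking (z :: s).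
  have -> : z :: s = belast z s1 ++ [:: y1, x, y2 & w2].
    by rewrite -L1 /s -cat_cons -rcons_cons (lastI z s1) -!cats1 -!catA.
  rewrite nonbacktracking_split /= y12.
  by move: N1 N2; rewrite -cats1 (lastI z s1) L1 -cats1 -catA /= => -> ->.
have Hu : ~~ uniq (z :: s).
  by rewrite /= negb_and negbK /s mem_cat -L2 mem_last orbT.
have [c /andP[Hc Hcs]] := nonbacktracking_cycle (leqnn _) Hp Hnb Hu.
exists c; rewrite Hc (leq_trans Hcs) // /s size_cat size_rcons /=.
by rewrite addSn addnS !ltnS leq_add.
Qed.

End NonBacktracking.

(* Bootstrap percolation restricted to a tree.  [tree_infected f k par x] holds
   when x is infected within k rounds of r-neighbour bootstrap percolation from the
   seeds f, using only the depth-k non-backtracking tree below x (entered from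
   par).  This is a lower bound for the true process. *)
Section TreeInfection.
Variable T : finType.
Variable e : rel T.
Variable r : nat.

Definition children (par x : T) : seq T := enum (nbhd e x :\ par).

Lemma mem_children par x y : (y \in children par x) = (y != par) && e x y.
Proof. by rewrite mem_enum in_setD1 /nbhd in_set. Qed.

Fixpoint tree_infected (f : T -> bool) (k : nat) (par x : T) : bool :=
  if k is k'.+1 then
    f x || (r <= count (fun y => tree_infected f k' x y) (children par x))
  else f x.

Lemma tree_infected_local k par x f g :
  (forall z, nb_reach e k par x z -> f z = g z) ->
  tree_infected f k par x = tree_infected g k par x.
Proof.
elim: k par x => [|k IH] par x fg /=; first by apply: fg; rewrite /= eqxx.
rewrite fg /=; last by rewrite eqxx.
congr (_ || (r <= _)); apply: eq_in_count => y.
rewrite mem_children => /andP[ypar xy]; apply: IH => z Hz; apply: fg.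
by rewrite /=; apply/orP; right; apply/existsP; exists y; rewrite xy ypar.
Qed.

Lemma bp_iter_grows (A : {set T}) i : A \subset bp_iter e r A i.
Proof. by elim: i => [|i IH] //=; apply: subset_trans IH (subsetUl _ _). Qed.

Lemma bp_iter_mono (A B : {set T}) i :
  A \subset B -> bp_iter e r A i \subset bp_iter e r B i.
Proof.
move=> AB; elim: i => [|i IH] //=.
apply/subsetP => v; rewrite /bp_step !in_setU !in_set => /orP[Hv|Hv].
  by rewrite (subsetP IH _ Hv).
by rewrite (leq_trans Hv) ?orbT // subset_leq_card // setIS.
Qed.

Lemma tree_infected_bp f k par x :
  tree_infected f k par x -> x \in bp_iter e r [set y | f y] k.
Proof.
elim: k par x => [|k IH] par x /=; first by rewrite in_set.
case/orP => [fx|Hr].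
  by apply: (subsetP (bp_iter_grows _ k.+1)); rewrite in_set.
rewrite /bp_step in_setU in_set (leq_trans Hr) ?orbT //.
rewrite -size_filter cardE; apply: uniq_leq_size; first exact/filter_uniq/enum_uniq.
move=> y.
rewrite mem_filter mem_children mem_enum in_setI /nbhd in_set.
by case/andP=> /IH -> /andP[_ ->].
Qed.

End TreeInfection.

(* The binomial tail [btail m q t] = P[Bin(m, q) >= t], defined by conditioning
   on the first trial. *)
Fixpoint btail (m : nat) (q : R) (t : nat) : R :=
  match m with
  | 0 => if t is 0 then 1%R else 0%R
  | m'.+1 => if t is t'.+1 then (q * btail m' q t' + (1 - q) * btail m' q t'.+1)%R
             else 1%R
  end.

Lemma pow_le_one x n : (0 <= x)%R -> (x <= 1)%R -> (x ^ n <= 1)%R.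
Proof.
move=> x0 x1; elim: n => [|n IH] /=; first lra.
by have := pow_le x n x0; nra.
Qed.

Section BinomialTail.
Variable q : R.
Hypothesis q_ge0 : (0 <= q)%R.
Hypothesis q_le1 : (q <= 1)%R.

Lemma btail0 m : btail m q 0 = 1%R.
Proof. by case: m. Qed.

Lemma btail_range m t : (0 <= btail m q t <= 1)%R.
Proof. elim: m t => [|m IH] [|t] /=; try lra; by have := IH t; have := IH t.+1; nra. Qed.

Lemma btail_decr m t : (btail m q t.+1 <= btail m q t)%R.
Proof.
elim: m t => [|m IH] [|t] /=; try lra.
- by have := btail_range m 1; rewrite btail0; nra.
- by have := IH t; have := IH t.+1; nra.
Qed.

Lemma btail_mono_trials m m' t : m <= m' -> (btail m q t <= btail m' q t)%R.
Proof.
move=> mm'; rewrite -(subnKC mm'); elim: (m' - m) => [|k IH]; first by rewrite addn0; lra.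
apply: Rle_trans IH _; rewrite addnS.
case: t => [|t] /=; first by rewrite btail0; lra.
by have := btail_decr (m + k) t; nra.
Qed.

Lemma btail_ge_term m t : (INR 'C(m, t) * q ^ t * (1 - q) ^ m <= btail m q t)%R.
Proof.
elim: m t => [|m IH] [|t] /=; try lra.
  have := pow_le (1 - q) m ltac:(lra).
  have := @pow_le_one (1 - q) m ltac:(lra) ltac:(lra).
  nra.
rewrite binS plus_INR.
have H1 := IH t; have H2 := IH t.+1; rewrite /= in H2.
have hA : (0 <= q ^ t * (1 - q) ^ m)%R by apply: Rmult_le_pos; apply: pow_le; lra.
have hC : (0 <= INR 'C(m, t) * q * (q ^ t * (1 - q) ^ m))%R.
  by apply: Rmult_le_pos => //; apply: Rmult_le_pos => //; apply: pos_INR.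
have := pos_INR 'C(m, t.+1).
nra.
Qed.

Lemma btail_lower_tail m t :
  ((1 - btail m q t) * (1 - q) ^ t <= INR m.+1 ^ t * (1 - q) ^ m)%R.
Proof.
have u_ge0 n : (0 <= (1 - q) ^ n)%R by apply: pow_le; lra.
elim: m t => [|m IH] [|t]; [simpl..|].
- lra.
- by have := @pow_le_one (1 - q) t ltac:(lra) ltac:(lra); rewrite pow1; nra.
- by have := u_ge0 m; nra.
have IH1 := IH t; have IH2 := IH t.+1.
change (btail m.+1 q t.+1) with (q * btail m q t + (1 - q) * btail m q t.+1)%R.
rewrite -!tech_pow_Rmult in IH2 *; rewrite S_INR.
set M := INR m.+1 in IH1 IH2 *.
have M_ge1 : (1 <= M)%R by rewrite /M S_INR; have := pos_INR m; lra.
have Mt_ge0 : (0 <= M ^ t)%R by apply: pow_le; lra.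
have Mt_le : (q * M ^ t + M * M ^ t <= (M + 1) * (M + 1) ^ t)%R.
  have : (M ^ t <= (M + 1) ^ t)%R by apply: pow_incr; lra.
  nra.
have E : ((1 - (q * btail m q t + (1 - q) * btail m q t.+1)) * ((1 - q) * (1 - q) ^ t)
   = q * (1 - q) * ((1 - btail m q t) * (1 - q) ^ t)
     + (1 - q) * ((1 - btail m q t.+1) * ((1 - q) * (1 - q) ^ t)))%R by ring.
rewrite E.
have h1 := Rmult_le_compat_l (q * (1 - q)) _ _ ltac:(nra) IH1.
have h2 := Rmult_le_compat_l (1 - q) _ _ ltac:(lra) IH2.
have h3 := Rmult_le_compat_l ((1 - q) * (1 - q) ^ m) _ _ ltac:(have := u_ge0 m; nra) Mt_le.
lra.
Qed.

End BinomialTail.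

Lemma btail_mono_prob q q' m t : (0 <= q)%R -> (q <= q')%R -> (q' <= 1)%R ->
  (btail m q t <= btail m q' t)%R.
Proof.
move=> q0 qq' q'1; elim: m t => [|m IH] [|t] /=; try lra.
have := IH t; have := IH t.+1; have := btail_decr (q:=q') ltac:(lra) ltac:(lra) m t.
have := btail_range (q:=q) ltac:(lra) ltac:(lra) m t.
have := btail_range (q:=q) ltac:(lra) ltac:(lra) m t.+1.
nra.
Qed.

Section IndependentCount.
Variable T : finType.
Variable p : R.
Hypothesis p_ge0 : (0 <= p)%R.
Hypothesis p_le1 : (p <= 1)%R.
Variable l : seq T.
Variables (G : T -> (T -> bool) -> bool) (D : T -> pred T) (q : R).
Hypothesis q_ge0 : (0 <= q)%R.
Hypothesis q_le1 : (q <= 1)%R.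

Let prob (E : (T -> bool) -> bool) := bexp p l (fun f => indR (E f)).

Let at_least (t : nat) (cs : seq T) (f : T -> bool) := t <= count (fun c => G c f) cs.

Lemma at_least_depends cs t :
  (forall c, c \in cs -> depends_on (fun f => indR (G c f)) (D c)) ->
  depends_on (fun f => indR (at_least t cs f)) [pred z | has (fun c => D c z) cs].
Proof.
move=> GD f g fg; congr (indR (t <= _)); apply: eq_in_count => c cs_c.
apply: indR_inj; apply: (GD c cs_c) => y Dy; apply: fg.
by apply/hasP; exists c.
Qed.

Lemma prob_at_least_decr cs t : (prob (at_least t.+1 cs) <= prob (at_least t cs))%R.
Proof.
apply: (bexp_le p_ge0 p_le1) => f; rewrite /at_least.
case lt_t: (t < count _ cs); last by case: (t <= _) => /=; lra.
by rewrite (ltnW lt_t) /=; lra.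
Qed.

(* Conditioning on the first event, which is independent of the others. *)
Lemma prob_at_least_cons c cs t : c \notin cs ->
  (forall c', c' \in c :: cs -> depends_on (fun f => indR (G c' f)) (D c')) ->
  (forall c1 c2 z, c1 \in c :: cs -> c2 \in c :: cs -> c1 != c2 ->
     D c1 z -> D c2 z -> False) ->
  prob (at_least t.+1 (c :: cs)) =
  (prob (G c) * prob (at_least t cs) + (1 - prob (G c)) * prob (at_least t.+1 cs))%R.
Proof.
move=> c_cs GD disj.
have split_event f : indR (at_least t.+1 (c :: cs) f)
    = (indR (G c f) * indR (at_least t cs f)
       + (1 - indR (G c f)) * indR (at_least t.+1 cs f))%R.
  by rewrite /at_least /=; case: (G c f) => /=; rewrite ?add0n ?add1n ?ltnS; ring.
have GD' c' : c' \in cs -> depends_on (fun f => indR (G c' f)) (D c').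
  by move=> cs_c'; apply: GD; rewrite in_cons cs_c' orbT.
have Dc_cs z : D c z -> [pred z | has (fun c' => D c' z) cs] z -> False.
  move=> Dz /hasP[c' cs_c' D'z]; apply: (disj c c' z) => //.
  - exact: mem_head.
  - by rewrite in_cons cs_c' orbT.
  - by apply: contraNneq c_cs => ->.
have gD : depends_on (fun f => indR (G c f)) (D c) by apply: GD; rewrite mem_head.
have gD' : depends_on (fun f => 1 - indR (G c f))%R (D c).
  by move=> f f' ff'; rewrite (gD f f' ff').
rewrite /prob (bexp_ext p l split_event) bexp_add.
rewrite (bexp_indep p l gD (at_least_depends _ GD') Dc_cs).
by rewrite (bexp_indep p l gD' (at_least_depends _ GD') Dc_cs) bexp_compl.
Qed.

Lemma prob_count_ge_btail (cs : seq T) :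
  uniq cs ->
  (forall c, c \in cs -> depends_on (fun f => indR (G c f)) (D c)) ->
  (forall c c' z, c \in cs -> c' \in cs -> c != c' -> D c z -> D c' z -> False) ->
  (forall c, c \in cs -> q <= prob (G c))%R ->
  forall t, (btail (size cs) q t <= prob (at_least t cs))%R.
Proof.
elim: cs => [|c cs IH] uniq_cs GD disj qG t.
  by case: t => [|t]; rewrite /prob /at_least /= bexp_const; lra.
case: t => [|t].
  rewrite btail0 /prob (bexp_constant p l (c := 1%R)); first exact: Rle_refl.
  by move=> f; rewrite /at_least leq0n.
move: (uniq_cs) => /andP[c_cs uniq_cs'].
have sub c' : c' \in cs -> c' \in c :: cs by rewrite in_cons => ->; rewrite orbT.
have IH' := IH uniq_cs' (fun c' cs_c' => GD c' (sub c' cs_c'))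
  (fun c1 c2 z h1 h2 => disj c1 c2 z (sub c1 h1) (sub c2 h2))
  (fun c' cs_c' => qG c' (sub c' cs_c')).
rewrite (prob_at_least_cons t c_cs GD disj).
have := IH' t; have := IH' t.+1; have := prob_at_least_decr cs t.
have := qG c (mem_head c cs); have := bexp_ind_range p_ge0 p_le1 l (G c).
have := btail_range q_ge0 q_le1 (size cs) t.+1.
change (btail (size (c :: cs)) q t.+1)
  with (q * btail (size cs) q t + (1 - q) * btail (size cs) q t.+1)%R.
rewrite /prob; nra.
Qed.

End IndependentCount.

(* [level_prob d r p k] lower-bounds the probability that the root of a depth-k
   subtree of a d-regular graph of large girth is tree-infected: every root has
   d - 1 children whose subtrees are independent, so Q_{k+1} = P[Bin(d-1,Q_k) >= r]. *)
Fixpoint level_prob (d r : nat) (p : R) (k : nat) : R :=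
  if k is k'.+1 then btail d.-1 (level_prob d r p k') r else p.

Lemma level_prob_range d r p k :
  (0 <= p)%R -> (p <= 1)%R -> (0 <= level_prob d r p k <= 1)%R.
Proof. by move=> p0 p1; elim: k => [|k IH] /=; [lra | apply: btail_range; lra]. Qed.

Section RandomContagiousSet.
Variable T : finType.
Variable e : rel T.
Hypothesis e_sym : symmetric e.
Hypothesis e_irr : irreflexive e.
Variables (r d R0 : nat) (p : R).
Hypothesis p_ge0 : (0 <= p)%R.
Hypothesis p_le1 : (p <= 1)%R.
Hypothesis e_reg : regular e d.
Hypothesis e_girth : forall c, is_cycle e c -> R0 + R0 < size c.

Let prob (E : (T -> bool) -> bool) := bexp p (enum T) (fun f => indR (E f)).

Lemma size_children par x : d.-1 <= size (children e par x).
Proof.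
rewrite /children -cardE; have := cardsD1 par (nbhd e x); rewrite e_reg.
by case: (par \in nbhd e x) => /=; lia.
Qed.

(* Below depth R0 the subtrees of distinct children are disjoint (by the girth),
   hence independent, and the recursion for level_prob applies. *)
Lemma tree_infected_prob k par x : k <= R0 ->
  (level_prob d r p k <= prob (fun f => tree_infected e r f k par x))%R.
Proof.
elim: k par x => [|k IH] par x k_R0 /=.
  by rewrite /prob bexp_coin mem_enum inE; lra.
have [Q0 Q1] := level_prob_range d r k p_ge0 p_le1.
apply: Rle_trans (btail_mono_trials Q0 Q1 r (size_children par x)) _.
pose many f := r <= count (fun y => tree_infected e r f k x y) (children e par x).
apply: (@Rle_trans _ (prob many)).
  2: by apply: (bexp_le p_ge0 p_le1) => f; rewrite /many; case: (f x); case: (r <= _) => /=; lra.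
apply: (prob_count_ge_btail p_ge0 p_le1
  (G := fun y f => tree_infected e r f k x y) (D := fun y => nb_reach e k x y)) => //.
- exact: enum_uniq.
- by move=> c _ f g fg; congr indR; apply: tree_infected_local.
- move=> c c' z; rewrite !mem_children => /andP[_ xc] /andP[_ xc'] cc' zc zc'.
  have [cy /andP[cy_cycle cy_size]] := nb_reach_overlap_cycle e_sym e_irr xc xc' cc' zc zc'.
  by have := e_girth cy_cycle; lia.
- by move=> c _; apply: IH; lia.
Qed.

Definition seeds_and_failures (f : T -> bool) : {set T} :=
  [set x | f x] :|: [set x | ~~ tree_infected e r f R0 x x].

Lemma seeds_and_failures_contagious f : contagious e r (seeds_and_failures f).
Proof.
move=> v; case Hv: (tree_infected e r f R0 v v).
  exists R0; apply: (subsetP (bp_iter_mono e r R0 (subsetUl _ _))).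
  exact: tree_infected_bp Hv.
by exists 0; rewrite /= /seeds_and_failures in_setU !in_set Hv orbT.
Qed.

Lemma card_set_count (P : pred T) : #|[set x | P x]| = count P (enum T).
Proof.
rewrite cardsE cardE /enum_mem size_filter count_filter.
by apply: eq_count => x; rewrite /= !inE andbT.
Qed.

Lemma small_contagious_set :
  exists f, (INR #|seeds_and_failures f| <= INR #|T| * (p + (1 - level_prob d r p R0)))%R.
Proof.
pose bad f x := f x || ~~ tree_infected e r f R0 x x.
have [f Hf] := bexp_witness p_ge0 p_le1 (enum T)
  (fun f => INR (count (bad f) (enum T))).
exists f.
have -> : seeds_and_failures f = [set x | bad f x] by apply/setP => x; rewrite !inE.
rewrite card_set_count; apply: Rle_trans Hf _.
rewrite cardT; apply: bexp_count_le => x _.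
apply: Rle_trans (bexp_le p_ge0 p_le1 _
  (G := fun f => indR (f x) + (1 - indR (tree_infected e r f R0 x x)))%R _) _.
  by move=> g; rewrite /bad; case: (g x); case: (tree_infected _ _ _ _ _ _) => /=; lra.
rewrite bexp_add bexp_coin mem_enum inE bexp_compl.
by have := tree_infected_prob x x (leqnn R0); rewrite /prob; lra.
Qed.

End RandomContagiousSet.

Lemma INR_expn m n : INR (expn m n) = (INR m ^ n)%R.
Proof. by elim: n => [|n IH] //; rewrite expnS mult_INR IH /=; ring. Qed.

Lemma expn_sub_le_ffact m t : expn (m - t) t <= m ^_ t.
Proof.
elim: t m => [|t IH] m //; rewrite ffactnS expnS leq_mul ?leq_subr //.
by apply: leq_trans (IH m.-1); rewrite -subn1 subnAC subn1 -subnS.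
Qed.

Lemma binom_fact_lower m t : (INR (expn (m - t) t) <= INR 'C(m, t) * INR t`!)%R.
Proof.
rewrite -mult_INR; apply: le_INR; apply/leP.
by rewrite multE bin_ffact expn_sub_le_ffact.
Qed.

Lemma bernoulli_ineq q n : (0 <= q <= 1)%R -> (1 - INR n * q <= (1 - q) ^ n)%R.
Proof.
move=> q01; elim: n => [|n IH]; first by simpl; lra.
rewrite S_INR -tech_pow_Rmult; have := pow_le (1 - q) n ltac:(lra); have := pos_INR n; nra.
Qed.

Lemma binom_term_le_pow q n j : (0 <= q)%R -> (INR 'C(n, j) * q ^ j <= (1 + q) ^ n)%R.
Proof.
move=> q0; elim: n j => [|n IH] [|j].
- by simpl; lra.
- by rewrite bin0n /=; have := pow_le q j q0; nra.
- by rewrite bin0 /=; have := pow_R1_Rle (1 + q) n ltac:(lra); nra.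
- rewrite binS plus_INR -!tech_pow_Rmult.
  have := IH j; have := IH j.+1; rewrite -tech_pow_Rmult.
  by have := pow_le q j q0; have := pos_INR 'C(n, j); nra.
Qed.

Lemma half_le_spare d t : t.*2.+2 <= d -> (INR d / 2 <= INR (d.-1 - t))%R.
Proof.
move=> td; have : d <= (d.-1 - t).*2 by lia.
by move/leP/le_INR; rewrite -addnn plus_INR; lra.
Qed.

Lemma binom_half_lower d t : t.*2.+2 <= d ->
  ((INR d / 2) ^ t <= INR 'C(d.-1, t) * INR t`!)%R.
Proof.
move=> td; apply: Rle_trans (binom_fact_lower _ _); rewrite INR_expn.
apply: pow_incr; split; last exact: half_le_spare.
by have := pos_INR d; lra.
Qed.

Lemma fact_pos n : (0 < INR n`!)%R.
Proof. by apply: lt_0_INR; apply/ltP; apply: fact_gt0. Qed.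

(* The constant c_r of the lower bound P[Bin(d-1,q) >= r] >= c_r (d q)^r. *)
Definition low_const (r : nat) : R := (/ (2 * INR r`!) * (/ 2) ^ r)%R.

Lemma low_const_pos r : (0 < low_const r)%R.
Proof.
apply: Rmult_lt_0_compat; last by apply: pow_lt; lra.
by apply: Rinv_0_lt_compat; have := fact_pos r; lra.
Qed.

Lemma low_const_le_half r : (low_const r <= / 2)%R.
Proof.
have F1 : (1 <= INR r`!)%R by apply: (le_INR 1); apply/leP; apply: fact_gt0.
have := pow_le_one r (x := / 2) ltac:(lra) ltac:(lra).
have := pow_le (/ 2) r ltac:(lra).
have : (/ (2 * INR r`!) <= / 2)%R by apply: Rinv_le_contravar; lra.
have : (0 <= / (2 * INR r`!))%R by apply/Rlt_le/Rinv_0_lt_compat; lra.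
rewrite /low_const; nra.
Qed.

(* Small success probability: if q <= 1/(2d) then
   P[Bin(d-1, q) >= r] >= c_r d^r q^r (the event of exactly r successes). *)
Lemma btail_small_prob r d q : r.*2.+2 <= d -> (0 <= q)%R -> (q * (2 * INR d) <= 1)%R ->
  (low_const r * INR d ^ r * q ^ r <= btail d.-1 q r)%R.
Proof.
move=> rd q0 qd.
have d1 : (1 <= INR d)%R by apply: (le_INR 1); apply/leP; lia.
have q1 : (q <= 1)%R by nra.
set C := INR 'C(d.-1, r); set F := INR r`!.
have F0 : (0 < F)%R := fact_pos r.
have C0 : (0 <= C)%R by apply: pos_INR.
have qr0 : (0 <= q ^ r)%R by apply: pow_le.
have hC : ((INR d / 2) ^ r <= C * F)%R := binom_half_lower rd.
have hZ : (/ 2 <= (1 - q) ^ d.-1)%R.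
  apply: Rle_trans (bernoulli_ineq _ _ ); last lra.
  have : (INR d.-1 * q <= INR d * q)%R.
    by apply: Rmult_le_compat_r => //; apply: le_INR; apply/leP; lia.
  lra.
apply: Rle_trans (btail_ge_term q0 q1 d.-1 r).
have -> : (low_const r * INR d ^ r * q ^ r = / (2 * F) * (INR d / 2) ^ r * q ^ r)%R.
  by rewrite /low_const /F /Rdiv Rpow_mult_distr; field; apply: Rgt_not_eq.
apply: (@Rle_trans _ (/ (2 * F) * (C * F) * q ^ r)).
  apply: Rmult_le_compat_r => //; apply: Rmult_le_compat_l => //.
  by apply/Rlt_le/Rinv_0_lt_compat; lra.
have -> : (/ (2 * F) * (C * F) * q ^ r = C * q ^ r * / 2)%R by field; lra.
by apply: Rmult_le_compat_l => //; apply: Rmult_le_pos.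
Qed.

(* (d/2)^j q^j (1-q)^(d-1) <= j! when 2j + 2 <= d: compare with one term of
   the expansion of (1 + q)^(d-1) and use (1 - q)(1 + q) <= 1. *)
Lemma binom_decay d j q : j.*2.+2 <= d -> (0 <= q <= 1)%R ->
  ((INR d / 2) ^ j * q ^ j * (1 - q) ^ d.-1 <= INR j`!)%R.
Proof.
move=> jd q01.
set A := ((1 - q) ^ d.-1)%R; set C := INR 'C(d.-1, j); set F := INR j`!.
have A0 : (0 <= A)%R by apply: pow_le; lra.
have qj0 : (0 <= q ^ j)%R by apply: pow_le; lra.
have AP : (A * (1 + q) ^ d.-1 <= 1)%R.
  by rewrite /A -Rpow_mult_distr; apply: pow_le_one; nra.
have CP : (C * q ^ j <= (1 + q) ^ d.-1)%R by apply: binom_term_le_pow; lra.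
have hC : ((INR d / 2) ^ j <= C * F)%R := binom_half_lower jd.
have F0 : (0 < F)%R := fact_pos j.
have h1 : ((INR d / 2) ^ j * q ^ j * A <= C * F * q ^ j * A)%R.
  by apply: Rmult_le_compat_r => //; apply: Rmult_le_compat_r.
have h2 : (C * q ^ j * A <= 1)%R.
  by apply: Rle_trans AP; rewrite Rmult_comm; apply: Rmult_le_compat_l.
nra.
Qed.

(* The constant M of the bound P[Bin(d-1, q) < r] <= M / d^2 for fixed q. *)
Definition tail_const (r : nat) (q : R) : R :=
  (INR (r.+2)`! / ((1 - q) ^ r * q ^ (r.+2) * (/ 2) ^ (r.+2)))%R.

Lemma tail_const_pos r q : (0 < q)%R -> (q < 1)%R -> (0 < tail_const r q)%R.
Proof.
move=> q0 q1; apply: Rdiv_lt_0_compat; first exact: fact_pos.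
by apply: Rmult_lt_0_compat; [apply: Rmult_lt_0_compat|]; apply: pow_lt; lra.
Qed.

Lemma btail_large_prob r d q : r.*2 + 6 <= d -> (0 < q)%R -> (q < 1)%R ->
  ((1 - btail d.-1 q r) * INR d ^ 2 <= tail_const r q)%R.
Proof.
move=> rd q0 q1.
have d1 : (1 <= INR d)%R by apply: (le_INR 1); apply/leP; lia.
have hU := btail_lower_tail (Rlt_le _ _ q0) (Rlt_le _ _ q1) d.-1 r.
rewrite prednK in hU; last by lia.
have hD := binom_decay (d := d) (j := r.+2) (q := q) ltac:(lia) ltac:(lra).
have hb := btail_range (Rlt_le _ _ q0) (Rlt_le _ _ q1) d.-1 r.
set W := ((1 - q) ^ r * q ^ r.+2 * (/ 2) ^ r.+2)%R.
have W0 : (0 < W)%R.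
  by apply: Rmult_lt_0_compat; [apply: Rmult_lt_0_compat|]; apply: pow_lt; lra.
have dr0 : (0 < INR d ^ r)%R by apply: pow_lt; lra.
have E : ((INR d / 2) ^ r.+2 = INR d ^ r * (INR d ^ 2 * (/ 2) ^ r.+2))%R.
  by rewrite /Rdiv Rpow_mult_distr -(addn2 r) pow_add; ring.
rewrite E in hD.
set X := (INR d ^ 2 * (/ 2) ^ r.+2 * q ^ r.+2)%R.
have X0 : (0 <= X)%R.
  by apply: Rmult_le_pos; [apply: Rmult_le_pos|]; apply: pow_le; lra.
apply: (Rmult_le_reg_r W) => //.
have -> : (tail_const r q * W = INR (r.+2)`!)%R by rewrite /tail_const -/W; field; lra.
apply: (@Rle_trans _ ((1 - btail d.-1 q r) * (1 - q) ^ r * X)).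
  by right; rewrite /W /X; ring.
apply: Rle_trans (Rmult_le_compat_r X _ _ X0 hU) _.
by apply: Rle_trans hD; right; rewrite /X; ring.
Qed.

Lemma Rpower_pos x y : (0 < Rpower x y)%R.
Proof. exact: exp_pos. Qed.

(* Stdlib's ln is 0 on non-positive arguments, so 0^y = 1. *)
Lemma Rpower_zero_base y : Rpower 0 y = 1%R.
Proof.
have ln0 : ln 0 = 0%R.
  by rewrite /ln; case: (Rlt_dec 0 0) => // lt00; case: (Rlt_irrefl 0 lt00).
by rewrite /Rpower ln0 Rmult_0_r exp_0.
Qed.

Lemma Rpower_one_base y : Rpower 1 y = 1%R.
Proof. by rewrite /Rpower ln_1 Rmult_0_r exp_0. Qed.

Lemma Rpower_Ropp_nat D n : (0 < D)%R -> Rpower D (- INR n) = (/ D ^ n)%R.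
Proof. by move=> D0; rewrite Rpower_Ropp Rpower_pow. Qed.

Section Exponent.
Variable r : nat.
Hypothesis r_ge2 : 2 <= r.

Let al := (/ INR (r - 1))%R.
Let s := (INR r / INR (r - 1))%R.

Lemma inv_exponent_pos : (0 < al)%R.
Proof. by apply/Rinv_0_lt_compat/lt_0_INR/ltP; lia. Qed.

Lemma exponent_bounds : (1 <= s <= 2)%R.
Proof.
have r1 : (1 <= INR (r - 1))%R by apply: (le_INR 1); apply/leP; lia.
have -> : s = (1 + al)%R.
  rewrite /s /al.
  have -> : INR r = (INR (r - 1) + 1)%R by rewrite -S_INR; congr INR; lia.
  by field; lra.
have : (al <= 1)%R by rewrite /al -Rinv_1; apply: Rinv_le_contravar; lra.
by have := inv_exponent_pos; lra.
Qed.

Lemma Rpower_exponent_lower D : (1 <= D)%R -> (/ D ^ 2 <= Rpower D (- s))%R.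
Proof.
move=> D1; rewrite -(Rpower_Ropp_nat 2); last lra.
by apply: Rle_Rpower => //; have := exponent_bounds; simpl; lra.
Qed.

Lemma Rpower_exponent_upper D : (1 <= D)%R -> (Rpower D (- s) <= / D)%R.
Proof.
move=> D1; have -> : (/ D = Rpower D (- 1))%R by rewrite Rpower_Ropp Rpower_1 //; lra.
by apply: Rle_Rpower => //; have := exponent_bounds; lra.
Qed.

Lemma Rpower_inv_exponent_ge1 c : (0 < c)%R -> (c <= 1)%R -> (1 <= Rpower c (- al))%R.
Proof.
move=> c0 c1; rewrite Rpower_Ropp -Rinv_1.
apply: Rinv_le_contravar; first exact: Rpower_pos.
rewrite -(Rpower_one_base al); apply: Rle_Rpower_l; [exact/Rlt_le/inv_exponent_pos | lra].
Qed.

Lemma growth_fixed_point c D : (0 < c)%R -> (0 < D)%R ->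
  let x0 := (Rpower c (- al) * Rpower D (- s))%R in
  (c * D ^ r * x0 ^ r = x0)%R.
Proof.
move=> c0 D0 x0.
have Dr0 : (0 < D ^ r)%R by apply: pow_lt.
have x0E : x0 = Rpower (c * D ^ r) (- al).
  rewrite /x0 -Rpower_mult_distr //; congr (_ * _)%R.
  by rewrite -Rpower_pow // Rpower_mult; congr Rpower; rewrite /s /al /Rdiv; ring.
have x00 : (0 < x0)%R by rewrite x0E; apply: Rpower_pos.
have x0r : (x0 ^ (r - 1) = / (c * D ^ r))%R.
  rewrite -Rpower_pow // x0E Rpower_mult.
  have -> : (- al * INR (r - 1) = - 1)%R by rewrite /al; field; apply: not_0_INR; lia.
  by rewrite Rpower_Ropp Rpower_1 //; nra.
have -> : (x0 ^ r = x0 * x0 ^ (r - 1))%R by rewrite tech_pow_Rmult; congr pow; lia.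
by rewrite x0r; field; nra.
Qed.

End Exponent.

(* Growth of Q_k = level_prob d r p k for the seed density p = 256 x0, where
   x0 is the fixed point of x |-> c_r d^r x^r.  While Q_k <= 1/(2d) we have
   Q_{k+1} >= c_r d^r Q_k^r, which from Q_0 = 2^8 x0 gives the doubly exponential
   bound Q_k >= x0 2^(2^(k+3)); once Q_k >= 1/(2d), one level gives a constant
   and one more level gives 1 - Q <= M / d^2. *)

(* The constant probability reached one level after crossing 1/(2d). *)
Definition mid_const (r : nat) : R := (low_const r * (/ 2) ^ r)%R.

Lemma mid_const_range r : (0 < mid_const r < 1)%R.
Proof.
have c0 := low_const_pos r; have c1 := low_const_le_half r.
have h0 : (0 < (/ 2) ^ r)%R by apply: pow_lt; lra.
have h1 : ((/ 2) ^ r <= 1)%R by apply: pow_le_one; lra.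
by rewrite /mid_const; split; [apply: Rmult_lt_0_compat | nra].
Qed.

Section Growth.
Variables (r d : nat) (x0 : R).
Hypothesis r_ge2 : 2 <= r.
Hypothesis d_large : r.*2 + 6 <= d.
Hypothesis x0_pos : (0 < x0)%R.
Hypothesis x0_fixed : (low_const r * INR d ^ r * x0 ^ r = x0)%R.
Hypothesis p_le1 : (256 * x0 <= 1)%R.
Hypothesis mid_above : (/ (2 * INR d) <= mid_const r)%R.

Let D := INR d.
Let h := (/ (2 * D))%R.
Let Q k := level_prob d r (256 * x0) k.
Let g k := (x0 * 2 ^ (expn 2 (k + 3)))%R.

Lemma D_ge1 : (1 <= D)%R.
Proof. by apply: (le_INR 1); apply/leP; lia. Qed.

Lemma h_pos : (0 < h)%R.
Proof. by have := D_ge1; rewrite /h => D1; apply: Rinv_0_lt_compat; lra. Qed.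

Lemma Q_range k : (0 <= Q k <= 1)%R.
Proof. by apply: level_prob_range; lra. Qed.

Lemma Q_after_threshold k : (h <= Q k)%R -> (mid_const r <= Q k.+1)%R.
Proof.
move=> hQ; have [Q0 Q1] := Q_range k; have h0 := h_pos; have D1 := D_ge1.
apply: Rle_trans (btail_mono_prob d.-1 r (Rlt_le _ _ h0) hQ Q1).
apply: Rle_trans (btail_small_prob (r := r) (d := d) (q := h) ltac:(lia) (Rlt_le _ _ h0) _).
  right; rewrite /mid_const Rmult_assoc -Rpow_mult_distr /h -/D.
  by congr (_ * _ ^ _)%R; field; lra.
by rewrite /h -/D; right; field; lra.
Qed.

Lemma Q_dichotomy k : (h <= Q k)%R \/ ((g k <= Q k)%R /\ (g k <= h)%R).
Proof.
elim: k => [|k [hQ|[gQ gh]]].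
- have -> : Q 0 = g 0 by rewrite /Q /g /=; ring.
  by case: (Rle_dec (g 0) h) => ?; [right | left]; lra.
- by left; apply: Rle_trans (Q_after_threshold hQ); exact: mid_above.
have [Q0 Q1] := Q_range k; have D1 := D_ge1.
have g0 : (0 <= g k)%R by apply: Rmult_le_pos; [lra | apply: pow_le; lra].
suff gQ' : (g k.+1 <= Q k.+1)%R by case: (Rle_dec (g k.+1) h) => ?; [right | left]; lra.
apply: Rle_trans (btail_mono_prob d.-1 r g0 gQ Q1).
apply: Rle_trans (btail_small_prob (r := r) (d := d) (q := g k) ltac:(lia) g0 _); last first.
  apply: Rle_trans (Rmult_le_compat_r (2 * D) _ _ _ gh) _; first lra.
  by rewrite /h; right; field; lra.
(* g_{k+1} = x0 (2^(2^(k+3)))^2 <= x0 (2^(2^(k+3)))^r = c d^r g_k^r. *)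
rewrite /g Rpow_mult_distr -Rmult_assoc x0_fixed.
apply: Rmult_le_compat_l; first lra.
have -> : (2 ^ expn 2 (k.+1 + 3) = (2 ^ expn 2 (k + 3)) ^ 2)%R.
  by rewrite -pow_mult; congr pow; rewrite multE addSn expnS mulnC.
rewrite -!pow_mult; apply: Rle_pow; first lra.
by apply/leP; rewrite !multE leq_mul2l r_ge2 orbT.
Qed.

Lemma Q_reaches_threshold k : d <= expn 2 (expn 2 (k + 3)) ->
  (/ (2 * D ^ 2) <= x0)%R -> (h <= Q k)%R.
Proof.
move=> dk x0_low; have D1 := D_ge1.
case: (Q_dichotomy k) => [//|[gQ _]]; apply: Rle_trans gQ.
have Dk : (D <= 2 ^ expn 2 (k + 3))%R.
  by rewrite /D -[2%R]/(INR 2) -INR_expn; apply/le_INR/leP.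
have -> : h = (/ (2 * D ^ 2) * D)%R by rewrite /h; field; lra.
apply: Rmult_le_compat => //; last lra.
by apply/Rlt_le/Rinv_0_lt_compat; nra.
Qed.

Lemma Q_final k : (h <= Q k)%R ->
  ((1 - Q k.+2) * D ^ 2 <= tail_const r (mid_const r))%R.
Proof.
move=> hQ; have [m0 m1] := mid_const_range r.
have mid_Q := Q_after_threshold hQ.
have [Q0 Q1] := Q_range k.+1.
have tail := btail_large_prob d_large m0 m1.
have mono : (btail d.-1 (mid_const r) r <= Q k.+2)%R.
  exact: (btail_mono_prob d.-1 r (Rlt_le _ _ m0) mid_Q Q1).
have D20 : (0 <= D ^ 2)%R by apply: pow_le; have := D_ge1; lra.
by apply: Rle_trans tail; apply: Rmult_le_compat_r => //; lra.
Qed.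

End Growth.

(* The girth hypothesis provides depth: if 2^(2^R0) < d then log2 log2 d > R0,
   so every cycle is longer than 2 R0 + 3 > R0 + R0. *)

Lemma log2_lower n x : (2 ^ n < x)%R -> (INR n < log2 x)%R.
Proof.
move=> nx; have ln2 : (0 < ln 2)%R by rewrite -ln_1; apply: ln_increasing; lra.
have := ln_increasing _ _ (pow_lt 2 n ltac:(lra)) nx.
rewrite ln_pow; last lra.
by move=> H; rewrite /log2; apply: (Rmult_lt_reg_r (ln 2)) => //; field_simplify; lra.
Qed.

Lemma girth_depth d R0 n : expn 2 (expn 2 R0) < d ->
  (2 * log2 (log2 (INR d)) + 3 <= INR n)%R -> R0 + R0 < n.
Proof.
move=> R0d girth.
have H1 : (INR (expn 2 R0) < log2 (INR d))%R.
  by apply: log2_lower; rewrite -[2%R]/(INR 2) -INR_expn; apply/lt_INR/ltP.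
have H2 : (INR R0 < log2 (log2 (INR d)))%R.
  by apply: log2_lower; rewrite -[2%R]/(INR 2) -INR_expn.
by apply/ltP/INR_lt; rewrite plus_INR; lra.
Qed.

Lemma exists_depth d : 16 < d ->
  exists R0, [/\ 2 <= R0, expn 2 (expn 2 R0) < d & d <= expn 2 (expn 2 R0.+1)].
Proof.
move=> d16.
have ex : exists R, d <= expn 2 (expn 2 R.+1).
  exists d; apply: leq_trans (ltnW (ltn_expl d (isT : 1 < 2))) _.
  by rewrite leq_exp2l // (leq_trans (leqnSn d)) // ltnW // ltn_expl.
case: (ex_minnP ex) => R0 dR0 R0_min; exists R0; split => //.
- case: R0 dR0 R0_min => [|[|R0]] dR0 _ //; move: dR0; rewrite /=; lia.
- rewrite ltnNge; apply/negP => dle.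
  case: R0 dR0 R0_min dle => [|R0] dR0 R0_min dle; first by move: dle; rewrite /=; lia.
  by have := R0_min R0 dle; lia.
Qed.

Definition seed_const (r : nat) : R := (256 * Rpower (low_const r) (- / INR (r - 1)))%R.
Definition fail_const (r : nat) : R := tail_const r (mid_const r).
Definition degree_threshold (r : nat) : R :=
  (INR (r.*2 + 6) + 17 + / (2 * mid_const r) + seed_const r)%R.

Lemma seed_factor_ge1 r : 2 <= r -> (1 <= Rpower (low_const r) (- / INR (r - 1)))%R.
Proof.
move=> r_ge2; apply: (Rpower_inv_exponent_ge1 r_ge2 (low_const_pos r)).
by have := low_const_le_half r; lra.
Qed.

Lemma constants_range r : 2 <= r ->
  [/\ (0 <= seed_const r)%R, (0 <= fail_const r)%R & (1 <= degree_threshold r)%R].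
Proof.
move=> r_ge2; have [m0 m1] := mid_const_range r.
have K0 : (0 <= seed_const r)%R.
  by have := seed_factor_ge1 r_ge2; rewrite /seed_const; lra.
split=> //; first by apply/Rlt_le/tail_const_pos.
have := pos_INR (r.*2 + 6).
have : (0 < / (2 * mid_const r))%R by apply: Rinv_0_lt_compat; lra.
by rewrite /degree_threshold; lra.
Qed.

Section LargeDegree.
Variables (r d : nat).
Hypothesis r_ge2 : 2 <= r.
Hypothesis d_large : (degree_threshold r <= INR d)%R.

Let s := (INR r / INR (r - 1))%R.
Let p := (seed_const r * Rpower (INR d) (- s))%R.

Lemma threshold_facts :
  [/\ r.*2 + 6 <= d, 16 < d, (seed_const r <= INR d)%R & (/ (2 * mid_const r) <= INR d)%R].
Proof.
have [m0 _] := mid_const_range r.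
have im0 : (0 < / (2 * mid_const r))%R by apply: Rinv_0_lt_compat; lra.
have K0 := seed_factor_ge1 r_ge2; have dr := pos_INR (r.*2 + 6).
have dl := d_large; rewrite /degree_threshold /seed_const in dl.
rewrite /seed_const; split; try lra.
- by apply/leP/INR_le; lra.
- by apply/ltP/(INR_lt 16); rewrite INR_IZR_INZ /=; lra.
Qed.

Lemma failure_prob_bound R0 : 2 <= R0 -> d <= expn 2 (expn 2 R0.+1) ->
  (p <= 1)%R /\ (1 - level_prob d r p R0 <= fail_const r * Rpower (INR d) (- s))%R.
Proof.
move=> R0_ge2 dR0.
have [dr _ Kd md] := threshold_facts.
have D1 : (1 <= INR d)%R by apply: (le_INR 1); apply/leP; lia.
have [m0 _] := mid_const_range r.
have ds_lo := Rpower_exponent_lower r_ge2 D1; have ds_hi := Rpower_exponent_upper r_ge2 D1.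
rewrite -/s in ds_lo ds_hi.
pose x0 := (Rpower (low_const r) (- / INR (r - 1)) * Rpower (INR d) (- s))%R.
have p_x0 : p = (256 * x0)%R by rewrite /p /x0 /seed_const; ring.
have Kc1 := seed_factor_ge1 r_ge2.
have x0_pos : (0 < x0)%R by apply: Rmult_lt_0_compat; apply: Rpower_pos.
have x0_fixed : (low_const r * INR d ^ r * x0 ^ r = x0)%R.
  have D0 : (0 < INR d)%R by lra.
  exact: (growth_fixed_point r_ge2 (low_const_pos r) D0).
have p_le1 : (p <= 1)%R.
  have K0 : (0 <= seed_const r)%R by rewrite /seed_const; lra.
  rewrite /p; apply: Rle_trans (Rmult_le_compat_l _ _ _ K0 ds_hi) _.
  by apply: (Rmult_le_reg_r (INR d)); [lra | rewrite Rmult_assoc Rinv_l; lra].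
split=> //.
have mid_above : (/ (2 * INR d) <= mid_const r)%R.
  have im0 : (0 < / (2 * mid_const r))%R by apply: Rinv_0_lt_compat; lra.
  have {1}-> : mid_const r = (/ (2 * / (2 * mid_const r)))%R by field; lra.
  by apply: Rinv_le_contravar; lra.
have x0_low : (/ (2 * INR d ^ 2) <= x0)%R.
  have D2 : (0 < INR d ^ 2)%R by apply: pow_lt; lra.
  have : (/ (2 * INR d ^ 2) <= / INR d ^ 2)%R by apply: Rinv_le_contravar; lra.
  by have := Rpower_pos (INR d) (- s); rewrite /x0; nra.
have [k R0k] : exists k, R0 = k.+2 by exists (R0 - 2); lia.
subst R0.
rewrite p_x0 in p_le1 *.
have hQ := Q_reaches_threshold r_ge2 dr x0_pos x0_fixed p_le1 mid_above
  (k := k) ltac:(by rewrite addn3) x0_low.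
have fin := Q_final r_ge2 dr x0_pos p_le1 hQ.
have D2 : (0 < INR d ^ 2)%R by apply: pow_lt; lra.
apply: Rle_trans (Rmult_le_compat_l (fail_const r) _ _ _ ds_lo).
  apply: (Rmult_le_reg_r (INR d ^ 2)) => //.
  by rewrite Rmult_assoc Rinv_l ?Rmult_1_r; [exact: fin | lra].
by apply/Rlt_le/tail_const_pos; have := mid_const_range r; lra.
Qed.

End LargeDegree.

Lemma density_lower r d B : 2 <= r -> (1 <= B)%R -> (INR d <= B)%R ->
  (1 <= B ^ 2 * Rpower (INR d) (- (INR r / INR (r - 1))))%R.
Proof.
move=> r_ge2 B1 dB.
case: d dB => [|d] dB.
  have : (1 <= B ^ 2)%R by rewrite -(pow1 2); apply: pow_incr; lra.
  by rewrite [INR 0]/= Rpower_zero_base; lra.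
have D1 : (1 <= INR d.+1)%R by apply: (le_INR 1); apply/leP.
have B2 : (0 <= B ^ 2)%R by apply: pow_le; lra.
apply: Rle_trans _ (Rmult_le_compat_l _ _ _ B2 (Rpower_exponent_lower r_ge2 D1)).
have D2 : (0 < INR d.+1 ^ 2)%R by apply: pow_lt; lra.
have dB2 : (INR d.+1 ^ 2 <= B ^ 2)%R by apply: pow_incr; lra.
rewrite -[X in (X <= _)%R](Rinv_r (INR d.+1 ^ 2)); last lra.
by apply: Rmult_le_compat_r => //; apply/Rlt_le/Rinv_0_lt_compat.
Qed.

Section Bounds.
Variables (r : nat) (T : finType) (e : rel T) (d m : nat).
Hypothesis r_ge2 : 2 <= r.
Hypothesis e_simple : simple_graph e.
Hypothesis e_reg : regular e d.
Hypothesis e_girth : girth_at_least e (2 * log2 (log2 (INR d)) + 3)%R.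
Hypothesis m_min : is_min_contagious_size e r m.

Let s := (INR r / INR (r - 1))%R.

Lemma min_contagious_le_card : (INR m <= INR #|T|)%R.
Proof.
apply/le_INR/leP; rewrite -cardsT; apply: m_min.2 => v.
by exists 0; rewrite /= in_setT.
Qed.

Lemma small_degree_bound B : (1 <= B)%R -> (INR d <= B)%R ->
  (INR m <= B ^ 2 * INR #|T| * Rpower (INR d) (- s))%R.
Proof.
move=> B1 dB; have := density_lower r_ge2 B1 dB; rewrite -/s.
by have := min_contagious_le_card; have := pos_INR #|T|; nra.
Qed.

Lemma large_degree_bound : (degree_threshold r <= INR d)%R ->
  (INR m <= (seed_const r + fail_const r) * INR #|T| * Rpower (INR d) (- s))%R.
Proof.
move=> d_large; have [e_sym e_irr] := e_simple.
have [_ d16 _ _] := threshold_facts r_ge2 d_large.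
have [R0 [R0_ge2 R0_lo R0_hi]] := exists_depth d16.
have girth c : is_cycle e c -> R0 + R0 < size c.
  by move=> c_cycle; apply: girth_depth R0_lo (e_girth c_cycle).
have [p_le1 fail] := failure_prob_bound r_ge2 d_large R0_ge2 R0_hi.
have p_ge0 : (0 <= seed_const r * Rpower (INR d) (- s))%R.
  by apply/Rmult_le_pos/Rlt_le/Rpower_pos; case: (constants_range r_ge2).
have [f small] := small_contagious_set e_sym e_irr r p_ge0 p_le1 e_reg girth.
have m_le : (INR m <= INR #|seeds_and_failures e r R0 f|)%R.
  by apply/le_INR/leP/m_min.2/seeds_and_failures_contagious.
apply: (Rle_trans _ _ _ m_le); apply: (Rle_trans _ _ _ small).
have := pos_INR #|T|; rewrite -/s in fail *; nra.
Qed.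

End Bounds.

(* The theorem, with C(r) = B^2 + K + M: the small-degree bound covers d < B and
   the random construction covers d >= B. *)
Theorem theorem9 :
  forall r : nat, 2 <= r ->
  exists C : R,
    forall (T : finType) (e : rel T) (d : nat),
      simple_graph e ->
      regular e d ->
      girth_at_least e (2 * log2 (log2 (INR d)) + 3)%R ->
      forall m : nat, is_min_contagious_size e r m ->
        (INR m <= C * INR #|T| * Rpower (INR d) (- (INR r / INR (r - 1))))%R.
Proof.
move=> r r_ge2.
have [K0 M0 B1] := constants_range r_ge2.
set B := degree_threshold r in B1 *; set K := seed_const r in K0 *.
set M := fail_const r in M0 *.
exists (B ^ 2 + K + M)%R => T e d e_simple e_reg e_girth m m_min.
have dens0 := Rpower_pos (INR d) (- (INR r / INR (r - 1))).
have n0 := pos_INR #|T|.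
have B2 : (0 <= B ^ 2 * INR #|T| * Rpower (INR d) (- (INR r / INR (r - 1))))%R.
  by apply: Rmult_le_pos; [apply: Rmult_le_pos => //; apply: pow_le |]; lra.
have KM : (0 <= (K + M) * INR #|T| * Rpower (INR d) (- (INR r / INR (r - 1))))%R.
  by apply: Rmult_le_pos; [apply: Rmult_le_pos |]; lra.
case: (Rlt_le_dec (INR d) B) => [dB | dB].
- by have := small_degree_bound r_ge2 m_min B1 (Rlt_le _ _ dB); lra.
- by have := large_degree_bound r_ge2 e_simple e_reg e_girth m_min dB; rewrite -/K -/M; lra.
Qed.
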